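(* Every tree converges to the empty graph under the operator $KB_e$; that is, for every tree $T$ there is $m$ such that $KB_e^k(T)$ is the empty graph for all $k\ge m$.
   Context: All graphs are finite, simple and undirected. A biclique of a graph $G$ is a maximal (with respect to inclusion) induced subgraph of $G$ that is a complete bipartite graph $K_{p,q}$ with $p,q\ge 1$. The edge-biclique graph $KB_e(G)$ is the graph with one vertex for each biclique of $G$, in which two distinct vertices are adjacent if and only if the corresponding bicliques have at least one edge in common; if $G$ has no bicliques (e.g. $G$ has no edges), $KB_e(G)$ is the empty graph (no vertices). Iterates: $KB_e^0(G)=G$, $KB_e^k(G)=KB_e(KB_e^{k-1}(G))$. *)

From mathcomp Require Import all_boot.
Set Implicit Arguments. Unset Strict Implicit. Unset Printing Implicit Defensive.

Record graph := Graph {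
  gV :> finType;
  gE : rel gV;
  gE_sym : symmetric gE;
  gE_irr : irreflexive gE }.

Section Bicliques.
Variable G : graph.
Local Notation V := (gV G).
Local Notation adj := (@gE G).

Definition is_complete_bip (S : {set V}) : bool :=
  [exists X : {set V},
    [&& X \subset S, X != set0, S :\: X != set0,
        [forall x in X, forall y in S :\: X, adj x y],
        [forall x in X, forall y in X, ~~ adj x y] &
        [forall x in S :\: X, forall y in S :\: X, ~~ adj x y]]].

(* A biclique: an inclusion-maximal induced complete bipartite subgraph
   (an induced subgraph is determined by its vertex set). *)
Definition is_biclique (S : {set V}) : bool :=
  is_complete_bip S &&
  [forall S' : {set V}, (S \subset S') && is_complete_bip S' ==> (S' == S)].

Definition biclique := {S : {set V} | is_biclique S}.

(* Two bicliques have an edge in common: an edge of G with both ends in both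
   (bicliques are induced subgraphs). *)
Definition share_edge (B1 B2 : {set V}) : bool :=
  [exists u, exists v, [&& adj u v, u \in B1, v \in B1, u \in B2 & v \in B2]].

Definition kbe_rel : rel biclique :=
  fun B1 B2 => (B1 != B2) && share_edge (val B1) (val B2).

Lemma kbe_rel_sym : symmetric kbe_rel.
Proof.
move=> B1 B2; rewrite /kbe_rel eq_sym; congr (_ && _).
apply/existsP/existsP => -[u /existsP [v /and5P [h1 h2 h3 h4 h5]]];
  exists u; apply/existsP; exists v; apply/and5P; split => //.
Qed.

Lemma kbe_rel_irr : irreflexive kbe_rel.
Proof. by move=> B; rewrite /kbe_rel eqxx. Qed.

End Bicliques.

Definition KBe (G : graph) : graph :=
  @Graph (biclique G) (@kbe_rel G) (@kbe_rel_sym G) (@kbe_rel_irr G).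

Definition KBe_iter (k : nat) (G : graph) : graph := iter k KBe G.

Definition is_empty_graph (G : graph) : Prop := #|gV G| = 0.

(* Trees: nonempty, connected, acyclic finite simple graphs.  A cycle is a
   simple closed walk with at least 3 distinct vertices. *)
Definition connected (G : graph) : Prop :=
  forall x y : gV G, connect (@gE G) x y.
Definition acyclic (G : graph) : Prop :=
  forall c : seq (gV G), ucycle (@gE G) c -> size c < 3.
Definition is_tree (G : graph) : Prop :=
  0 < #|gV G| /\ connected G /\ acyclic G.

From mathcomp Require Import all_boot.

Set Implicit Arguments. Unset Strict Implicit. Unset Printing Implicit Defensive.

(* Let G be an acyclic graph.  Having no triangles and no 4-cycles, G has as
   bicliques exactly certain closed neighbourhoods ("stars") N[v] of
   non-isolated vertices: every induced complete bipartite subgraph lies in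
   some star, and stars of non-isolated vertices are complete bipartite.
   Choosing such a centre for each biclique gives an injective map from the
   vertices of KB_e(G) to those of G which sends edges to edges (an edge shared
   by N[v] and N[w] must be vw).  Hence KB_e(G) is again acyclic.  Moreover
   the centre map is not onto when G is nonempty: G has a vertex x of degree
   at most one (otherwise one builds arbitrarily long simple paths), and if x
   is a centre, its unique neighbour y is not, as N[x] is included in N[y].
   So each application of KB_e loses a vertex, and after #|T| steps nothing
   is left. *)

Section Forest.
Variable G : graph.
Hypothesis G_acyclic : acyclic G.
Local Notation V := (gV G).
Local Notation adj := (@gE G).

Lemma adj_neq a b : adj a b -> a != b.
Proof. by move=> ab; apply: contraTneq ab => ->; rewrite gE_irr. Qed.

Lemma no_triangle a b c : adj a b -> adj b c -> adj c a -> False.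
Proof.
move=> ab bc ca; suff: ucycle adj [:: a; b; c] by move/G_acyclic.
rewrite /ucycle /= ab bc ca /= !inE negb_or.
by rewrite (adj_neq ab) (adj_neq bc) eq_sym (adj_neq ca).
Qed.

Lemma no_square x1 y1 x2 y2 : x1 != x2 -> y1 != y2 ->
  adj x1 y1 -> adj y1 x2 -> adj x2 y2 -> adj y2 x1 -> False.
Proof.
move=> nx ny a b c d; suff: ucycle adj [:: x1; y1; x2; y2] by move/G_acyclic.
rewrite /ucycle /= a b c d /= !inE !negb_or nx ny.
by rewrite (adj_neq a) (adj_neq b) (adj_neq c) eq_sym (adj_neq d).
Qed.

Definition star (v : V) : {set V} := v |: [set u | adj v u].

Lemma in_star v u : (u \in star v) = (u == v) || adj v u.
Proof. by rewrite !inE. Qed.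

(* An edge inside a star is incident to its centre (no triangles). *)
Lemma edge_in_star v a b :
  adj a b -> a \in star v -> b \in star v -> a = v \/ b = v.
Proof.
rewrite !in_star => ab; case: (a =P v) => [->|_]; first by left.
case: (b =P v) => [->|_] /= va vb; first by right.
by case: (no_triangle va ab); rewrite gE_sym.
Qed.

(* The star of a non-isolated vertex is complete bipartite, with parts
   {v} and the neighbours of v, the latter independent (no triangles). *)
Lemma star_complete_bip v u : adj v u -> is_complete_bip (star v).
Proof.
move=> vu; apply/existsP; exists [set v].
have inD y : (y \in star v :\: [set v]) = (y != v) && adj v y.
  by rewrite !inE; case: (y =P v).
apply/and3P; split; [|by apply/set0Pn; exists v; rewrite inE|apply/and4P; split].
- by rewrite sub1set in_star eqxx.
- by apply/set0Pn; exists u; rewrite inD vu eq_sym adj_neq.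
- apply/forall_inP => x; rewrite inE => /eqP ->.
  by apply/forall_inP => y; rewrite inD => /andP[].
- apply/forall_inP => x; rewrite inE => /eqP ->.
  by apply/forall_inP => y; rewrite inE => /eqP ->; rewrite gE_irr.
- apply/forall_inP => x; rewrite inD => /andP[_ vx].
  apply/forall_inP => y; rewrite inD => /andP[_ vy].
  by apply/negP => xy; apply: (no_triangle vx xy); rewrite gE_sym.
Qed.

Lemma complete_bip_edge (S : {set V}) : is_complete_bip S ->
  exists a b, [/\ adj a b, a \in S & b \in S].
Proof.
case/existsP => X /and3P[XS /set0Pn[x Xx] /and4P[/set0Pn[y Yy] /forall_inP XY _ _]].
exists x, y; split; first by have /forall_inP := XY x Xx; apply.
  exact: (subsetP XS).
by move: Yy; rewrite inE => /andP[].
Qed.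

(* Every complete bipartite set lies in the star of a non-isolated vertex:
   one of its parts is a single vertex, since two vertices in each part
   would span a 4-cycle. *)
Lemma complete_bip_in_star (S : {set V}) : is_complete_bip S ->
  exists v, S \subset star v /\ exists u, adj v u.
Proof.
case/existsP => X /and3P[XS /set0Pn[x0 Xx0] /and4P[/set0Pn[y0 Yy0] /forall_inP XY _ _]].
have adjXY x y : x \in X -> y \in S :\: X -> adj x y.
  by move=> hx hy; have /forall_inP := XY x hx; apply.
case: (boolP [forall x in X, x == x0]) => [/forall_inP X1|].
  exists x0; split; last by exists y0; apply: adjXY.
  apply/subsetP => s Ss; case: (boolP (s \in X)) => sX.
    by rewrite (eqP (X1 _ sX)) in_star eqxx.
  by rewrite in_star adjXY ?orbT // inE sX Ss.
case/forall_inPn => x1 Xx1 n10.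
have Y1 y : y \in S :\: X -> y = y0.
  move=> Yy; apply/eqP/negPn/negP => ny.
  apply: (no_square (x1 := x0) (y1 := y0) (x2 := x1) (y2 := y)).
  - by rewrite eq_sym.
  - by rewrite eq_sym.
  - exact: adjXY.
  - by rewrite gE_sym; apply: adjXY.
  - exact: adjXY.
  - by rewrite gE_sym; apply: adjXY.
exists y0; split; last by exists x0; rewrite gE_sym; apply: adjXY.
apply/subsetP => s Ss; case: (boolP (s \in X)) => sX.
  by rewrite in_star gE_sym adjXY ?orbT.
by rewrite (Y1 s) ?in_star ?eqxx // inE sX Ss.
Qed.

Lemma biclique_complete_bip (S : {set V}) : is_biclique S -> is_complete_bip S.
Proof. by case/andP. Qed.

Lemma biclique_maximal (S S' : {set V}) :
  is_biclique S -> S \subset S' -> is_complete_bip S' -> S' = S.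
Proof. by case/andP => _ /forallP/(_ S') + SS' cbS'; rewrite SS' cbS' => /eqP. Qed.

Lemma biclique_is_star (S : {set V}) : is_biclique S -> exists v, S = star v.
Proof.
move=> bS; have [v [Sv [u vu]]] := complete_bip_in_star (biclique_complete_bip bS).
by exists v; rewrite (biclique_maximal bS Sv (star_complete_bip vu)).
Qed.

Lemma centre_spec (B : biclique G) : {v | val B == star v}.
Proof. by apply: sigW; have [v ->] := biclique_is_star (valP B); exists v. Qed.

Definition centre (B : biclique G) : V := sval (centre_spec B).

Lemma centreE B : val B = star (centre B).
Proof. by apply/eqP; rewrite /centre; case: (centre_spec B). Qed.

Lemma centre_inj : injective centre.
Proof. by move=> B1 B2 e; apply: val_inj; rewrite !centreE e. Qed.

(* Bicliques sharing an edge have adjacent centres: the shared edge joins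
   the two centres. *)
Lemma centre_adj B1 B2 : kbe_rel B1 B2 -> adj (centre B1) (centre B2).
Proof.
case/andP => n12 /existsP[u /existsP[w /and5P[uw u1 w1 u2 w2]]].
have nc : centre B1 != centre B2 by apply: contraNneq n12 => /centre_inj ->.
rewrite centreE in u1 w1; rewrite centreE in u2 w2.
move: nc; case: (edge_in_star uw u1 w1) => <-; case: (edge_in_star uw u2 w2) => <-;
  by rewrite ?eqxx // gE_sym.
Qed.

(* KB_e preserves acyclicity: the centre map embeds cycles of KB_e(G) in G. *)
Lemma KBe_acyclic : acyclic (KBe G).
Proof.
move=> c /andP[cc uc]; rewrite -(size_map centre); apply: G_acyclic.
apply/andP; split; last by rewrite (map_inj_uniq centre_inj).
by apply: (homo_cycle (e := @kbe_rel G)) => // x y; apply: centre_adj.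
Qed.

(* Along a simple path x :: p, a neighbour of x other than the next vertex
   is not on p, or it would close a cycle of length at least 3. *)
Lemma fresh_neighbour x p y : uniq (x :: p) -> path adj x p ->
  adj x y -> y != head x p -> y \notin p.
Proof.
move=> up pp xy yh; apply/negP => yp.
have ip : index y p < size p by rewrite index_mem.
have iy : 0 < index y p.
  by case: p yp yh {up pp ip} => //= x1 p _; rewrite eq_sym => /negbTE ->.
set q := take (index y p).+1 p.
suff /G_acyclic : ucycle adj (x :: q).
  by rewrite /= size_takel //; case: (index y p) iy.
apply/andP; split; last exact: (take_uniq (index y p).+2 up).
rewrite /cycle rcons_path (last_nth x) size_takel //= nth_take // nth_index //.
rewrite gE_sym xy andbT.
by move: pp; rewrite -(cat_take_drop (index y p).+1 p) cat_path => /andP[].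
Qed.

Lemma long_simple_paths (x0 : V) :
  (forall x w, exists2 y, adj x y & y != w) ->
  forall k, exists x p, [/\ k <= size p, uniq (x :: p) & path adj x p].
Proof.
move=> nbr; elim=> [|k [x [p [hk up pp]]]]; first by exists x0, [::].
have [y xy yh] := nbr x (head x p).
exists y, (x :: p); split => //; last by rewrite /= gE_sym xy.
by rewrite cons_uniq up andbT inE negb_or (fresh_neighbour up pp xy yh) eq_sym adj_neq.
Qed.

Lemma low_degree_vertex (x0 : V) :
  exists x, forall y z, adj x y -> adj x z -> y = z.
Proof.
case: (boolP [exists x, [forall y, forall z, adj x y ==> adj x z ==> (y == z)]]).
  case/existsP => x /forallP low; exists x => y z xy xz; apply/eqP.
  by move: (low y) => /forallP/(_ z); rewrite xy xz.
move/existsPn => high.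
have nbr x w : exists2 y, adj x y & y != w.
  have /forallPn[y /forallPn[z]] := high x; rewrite !negb_imply => /and3P[xy xz yz].
  case: (y =P w) => [<-|/eqP yw]; last by exists y.
  by exists z; rewrite // eq_sym.
have [x [p [hk up _]]] := long_simple_paths x0 nbr #|V|.
by have := max_card (mem (x :: p)); rewrite (card_uniqP up) /= ltnNge hk.
Qed.

(* Some vertex is not a centre: if a low-degree vertex x is one, then x has
   a unique neighbour y, and y cannot be a centre, since N[x] is contained in
   the biclique N[y] and maximality would identify the two bicliques. *)
Lemma centre_not_onto (x0 : V) : exists v, forall B, centre B != v.
Proof.
have [x deg1] := low_degree_vertex x0.
case: (boolP [exists B, centre B == x]) => [/existsP[B /eqP cBx]|/existsPn]; last first.
  by exists x.
have [y xy] : exists y, adj x y.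
  have [a [b [ab aB bB]]] := complete_bip_edge (biclique_complete_bip (valP B)).
  rewrite centreE cBx in aB bB.
  by case: (edge_in_star ab aB bB) => e; [exists b | exists a]; rewrite -e // gE_sym.
exists y => B'; apply/eqP => cB'y.
have sub : star x \subset star y.
  apply/subsetP => u; rewrite !in_star => /orP[/eqP ->|xu].
    by rewrite gE_sym xy orbT.
  by rewrite (deg1 _ _ xu xy) eqxx.
have bx : is_biclique (star x) by rewrite -cBx -centreE (valP B).
have yx : adj y x by rewrite gE_sym.
have exy := biclique_maximal bx sub (star_complete_bip yx).
have eB : B' = B by apply: val_inj; rewrite !centreE cB'y cBx exy.
by move: xy; rewrite -cBx -cB'y eB gE_irr.
Qed.

Lemma KBe_card : #|KBe G| <= #|G|.-1.
Proof.
case: (posnP #|G|) => [G0|/card_gt0P[x0 _]].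
  by have := leq_card _ centre_inj; rewrite G0.
have [v hv] := centre_not_onto x0.
rewrite -(cardsC1 v) -cardsT -(card_imset _ centre_inj).
by apply: subset_leq_card; apply/subsetP => _ /imsetP[B _ ->]; rewrite !inE hv.
Qed.

End Forest.

Lemma KBe_iter_acyclic k (G : graph) : acyclic G -> acyclic (KBe_iter k G).
Proof. by move=> acG; elim: k => //= k IH; apply: KBe_acyclic. Qed.

Lemma KBe_iter_card k (G : graph) : acyclic G -> #|KBe_iter k G| <= #|G| - k.
Proof.
move=> acG; elim: k => [|k IH]; first by rewrite subn0.
rewrite /KBe_iter iterS; apply: leq_trans (KBe_card (KBe_iter_acyclic (k := k) acG)) _.
by rewrite subnS -!subn1 leq_sub2r.
Qed.

Theorem mainTheorem8 (T : graph) :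
  is_tree T ->
  exists m : nat, forall k : nat, m <= k -> is_empty_graph (KBe_iter k T).
Proof.
case=> _ [_ acT]; exists #|T| => k hk; apply/eqP; rewrite -leqn0.
by apply: leq_trans (KBe_iter_card k acT) _; rewrite leqn0 subn_eq0.
Qed.
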